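(* Let $\mathcal{M} = \{ t \in \mathbb{C}_2 : \text{the forward orbits of both critical points } 0 \text{ and } 1 \text{ under } f_t \text{ are bounded}\}$. Then $1 \in \mathcal{M}$, and $t = 1$ is a non-isolated boundary point of $\mathcal{M}$. That is, every $2$-adic neighborhood of $1$ in $\mathbb{C}_2$ contains parameters $t \notin \mathcal{M}$ and also parameters $t \in \mathcal{M}$ with $t \neq 1$.
   Context: Let $|\cdot|$ denote the $2$-adic absolute value on $\mathbb{C}_2$, normalized by $|2| = 1/2$. For $t \in \mathbb{C}_2$, let $f_t(z) = -\tfrac32 t(-2z^3+3z^2) + 1 \in \mathbb{C}_2[z]$. The critical points of $f_t$ are $0$ and $1$. Since $f_t(0) = 1$, the orbit of $0$ is bounded if and only if the orbit of $1$ is bounded. The forward orbit of $z$ under $f$ is $\{f^n(z) : n \ge 0\}$, where $f^n$ is the $n$-fold iterate of $f$. A map is called post-critically bounded (PCB) if all critical points have bounded forward orbits, and post-critically finite (PCF) if all critical points have finite forward orbits. *)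

From mathcomp Require Import all_boot all_order all_algebra.
From mathcomp Require Import reals.
Set Implicit Arguments. Unset Strict Implicit. Unset Printing Implicit Defensive.
Import Order.TTheory GRing.Theory Num.Theory.
Local Open Scope ring_scope.

(* C_2 is characterized (up to isometric isomorphism) as an algebraically
   closed field K with a non-archimedean absolute value |.| : K -> R,
   normalized by |2| = 1/2, complete, in which the algebraic numbers
   (roots of nonzero rational polynomials) are dense. *)

Definition algebraic_over_Q (K : fieldType) (y : K) : Prop :=
  exists p : {poly rat}, p != 0 /\ root (map_poly ratr p) y.

Record is_C2 (R : realType) (K : closedFieldType) (abs : K -> R) : Prop := {
  abs_ge0 : forall x, 0 <= abs x;
  abs_eq0 : forall x, abs x = 0 <-> x = 0;
  absM : forall x y, abs (x * y) = abs x * abs y;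
  abs_ultra : forall x y, abs (x + y) <= Num.max (abs x) (abs y);
  abs2 : abs 2%:R = 2%:R^-1;
  abs_complete : forall u : nat -> K,
    (forall e, 0 < e -> exists N, forall m n, (N <= m)%N -> (N <= n)%N ->
        abs (u m - u n) < e) ->
    exists l, forall e, 0 < e -> exists N, forall n, (N <= n)%N -> abs (u n - l) < e;
  alg_dense : forall x e, 0 < e -> exists y, algebraic_over_Q y /\ abs (x - y) < e
}.

Definition f_t (K : fieldType) (t z : K) : K :=
  - (3%:R / 2%:R) * t * (- (2%:R) * z ^+ 3 + 3%:R * z ^+ 2) + 1.

Definition bounded_orbit (R : realType) (K : fieldType) (abs : K -> R)
    (t z : K) : Prop :=
  exists B : R, forall n : nat, abs (iter n (f_t t) z) <= B.

Definition in_M (R : realType) (K : fieldType) (abs : K -> R) (t : K) : Prop :=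
  bounded_orbit abs t 0 /\ bounded_orbit abs t 1.

From mathcomp Require Import all_boot all_order all_algebra.
From mathcomp Require Import reals ring lra.
Set Implicit Arguments. Unset Strict Implicit. Unset Printing Implicit Defensive.
Import Order.TTheory GRing.Theory Num.Theory.
Local Open Scope ring_scope.

(* Write t = 1 + s and w = 2 z + 1.  Then 2 f_t^n(1) + 1 = V_n(s) for
   polynomials V_n with V_{n+1}(0) = 0, because for t = 1 the critical point 1
   lands on the fixed point -1/2, and |V_{n+1}'(0)| = 4^n.  Over an algebraically
   closed non-archimedean field the roots of V_{N+1} - c then give a parameter s
   with V_{N+1}(s) = c and |s| <= |c| / 4^N.  For c = 3 the critical point 1 is
   periodic under f_{1+s}, so 1 + s lies in M; for c = 1/2 it is sent to -1/4,
   and since |f_t(z)| = |z|^3 whenever |t| = 1 and |z| > 2 its orbit escapes. *)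

Record nonarch_abs (R : realFieldType) (K : fieldType) (abs : K -> R) : Prop :=
  NonArchAbs {
    nabs_ge0 : forall x, 0 <= abs x;
    nabs_eq0 : forall x, abs x = 0 <-> x = 0;
    nabsM : forall x y, abs (x * y) = abs x * abs y;
    nabs_ultra : forall x y, abs (x + y) <= Num.max (abs x) (abs y)
  }.

Lemma is_C2_nonarch (R : realType) (K : closedFieldType) (abs : K -> R) :
  is_C2 abs -> nonarch_abs abs.
Proof. by case=> *; split. Qed.

Section NonArchimedean.
Variables (R : realFieldType) (K : fieldType) (abs : K -> R).
Hypothesis na : nonarch_abs abs.

Lemma abs0 : abs 0 = 0. Proof. exact/(nabs_eq0 na). Qed.

Lemma abs_gt0 x : (0 < abs x) = (x != 0).
Proof.
rewrite lt_def (nabs_ge0 na) andbT; apply/idP/idP; apply: contra_neq.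
  by move=> ->; rewrite abs0.
by move/(nabs_eq0 na).
Qed.

Lemma abs1 : abs 1 = 1.
Proof.
have abs1_gt0 : 0 < abs 1 by rewrite abs_gt0 oner_neq0.
by apply: (mulfI (lt0r_neq0 abs1_gt0)); rewrite -(nabsM na) !mulr1.
Qed.

Lemma absN x : abs (- x) = abs x.
Proof.
have absN1 : abs (-1) = 1.
  apply/eqP; rewrite -(pexpr_eq1 (n := 2)) ?nabs_ge0 //.
  by rewrite expr2 -(nabsM na) mulrNN mulr1 abs1.
by rewrite -mulN1r (nabsM na) absN1 mul1r.
Qed.

Lemma absV x : abs x^-1 = (abs x)^-1.
Proof.
have [->|x_neq0] := eqVneq x 0; first by rewrite invr0 abs0 invr0.
have absx_neq0 : abs x != 0 by rewrite lt0r_neq0 ?abs_gt0.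
apply: (mulfI absx_neq0); rewrite -(nabsM na) !mulfV //; exact: abs1.
Qed.

Lemma absX x n : abs (x ^+ n) = abs x ^+ n.
Proof. by elim: n => [|n IH]; rewrite ?abs1 // !exprS (nabsM na) IH. Qed.

Lemma abs_add_smallr x y : abs y < abs x -> abs (x + y) = abs x.
Proof.
move=> lt_yx; apply/eqP; rewrite eq_le; apply/andP; split.
  by apply: le_trans (nabs_ultra na x y) _; rewrite ge_max lexx ltW.
have := nabs_ultra na (x + y) (- y); rewrite addrK absN le_max.
by case/orP=> // le_xy; move: (lt_le_trans lt_yx le_xy); rewrite ltxx.
Qed.

End NonArchimedean.

Section SmallRoot.
Variables (R : realFieldType) (K : closedFieldType) (abs : K -> R).
Hypothesis na : nonarch_abs abs.

Lemma abs_horner0_prod_XsubC (rs : seq K) (rho : R) : 0 <= rho ->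
    (forall z, z \in rs -> rho < abs z) ->
  rho * abs ((\prod_(z <- rs) ('X - z%:P))^`()).[0]
    < abs (\prod_(z <- rs) ('X - z%:P)).[0].
Proof.
move=> rho_ge0; elim: rs => [|r rs IH] rs_gt.
  by rewrite big_nil derivC horner0 (abs0 na) mulr0 hornerC (abs1 na) ltr01.
have {}IH := IH (fun z z_rs => rs_gt z (mem_behead (s := r :: rs) z_rs)).
have r_gt : rho < abs r by apply: rs_gt; rewrite mem_head.
set q := \prod_(z <- rs) _ in IH *.
have q0_gt0 : 0 < abs q.[0] by apply: le_lt_trans IH; rewrite mulr_ge0 ?nabs_ge0.
rewrite big_cons derivM derivB derivX derivC subr0 mul1r.
rewrite !(hornerD, hornerM, hornerN, hornerX, hornerC) sub0r (nabsM na) (absN na).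
apply: le_lt_trans (ler_wpM2l rho_ge0 (nabs_ultra na _ _)) _.
rewrite maxr_pMr // gt_max ltr_pM2r //= (nabsM na) (absN na) mulrCA.
by rewrite r_gt ltr_pM2l // (le_lt_trans rho_ge0 r_gt).
Qed.

Lemma exists_small_root (p : {poly K}) : (p^`()).[0] != 0 ->
  exists2 r, root p r & abs r * abs (p^`()).[0] <= abs p.[0].
Proof.
move=> dp0_neq0.
have dp0_gt0 : 0 < abs (p^`()).[0] by rewrite abs_gt0.
have p_neq0 : p != 0 by apply: contraNneq dp0_neq0 => ->; rewrite deriv0 horner0.
have [rs Dp] := closed_field_poly_normal p.
set rho := abs p.[0] / abs (p^`()).[0].
have [/hasP[r r_rs r_le]|/hasPn rs_gt] := boolP (has (fun z => abs z <= rho) rs).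
  by exists r; [rewrite Dp rootZ ?lead_coef_eq0 // root_prod_XsubC | rewrite -ler_pdivlMr].
have rho_ge0 : 0 <= rho by rewrite divr_ge0 ?nabs_ge0.
have {}rs_gt z : z \in rs -> rho < abs z by move/rs_gt; rewrite ltNge.
have := abs_horner0_prod_XsubC rho_ge0 rs_gt.
rewrite -(ltr_pM2l (_ : 0 < abs (lead_coef p))) ?abs_gt0 ?lead_coef_eq0 //.
rewrite mulrCA -!(nabsM na) -!hornerZ -derivZ -Dp /rho mulfVK ?ltxx //.
by rewrite lt0r_neq0.
Qed.

End SmallRoot.

(* In the coordinates t = 1 + s, w = 2 z + 1, the map f_t becomes
   w |-> -3 s + (1 + s) (3/4) w (w - 3)^2; crit_poly n is the n-th iterate of
   w = 3 (i.e. z = 1) as a polynomial in s. *)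
Definition crit_step {K : fieldType} (p : {poly K}) : {poly K} :=
  - (3%:R *: 'X) + (1 + 'X) * ((3%:R / 4%:R) *: (p * (p - 3%:R%:P) ^+ 2)).

Definition crit_poly {K : fieldType} n : {poly K} := iter n crit_step 3%:R%:P.

Section Dynamics.
Variables (R : realType) (K : fieldType) (abs : K -> R).
Hypotheses (na : nonarch_abs abs) (abs_two : abs 2%:R = 2%:R^-1).
Local Notation crit_poly := (@crit_poly K).

Lemma abs_three : abs 3%:R = 1.
Proof.
have abs_three_le1 : abs 3%:R <= 1.
  rewrite -natr1; apply: le_trans (nabs_ultra na 2%:R 1) _.
  by rewrite (abs1 na) abs_two ge_max lexx invf_le1 ?ler1n.
apply/eqP; rewrite eq_le abs_three_le1 /=.
have := nabs_ultra na 3%:R (- 2%:R).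
rewrite -natrB // (absN na) (abs1 na) abs_two le_max => /orP[//|].
by rewrite invf_ge1 ?ler1n // (ler_nat R 2 1).
Qed.

Lemma abs_four : abs 4%:R = 4%:R^-1.
Proof. by rewrite (natrM _ 2 2) (nabsM na) abs_two -invfM -natrM. Qed.

Lemma two_neq0 : (2%:R : K) != 0.
Proof. by rewrite -(abs_gt0 na) abs_two invr_gt0 ltr0n. Qed.

Lemma three_neq0 : (3%:R : K) != 0.
Proof. by rewrite -(abs_gt0 na) abs_three ltr01. Qed.

Lemma four_neq0 : (4%:R : K) != 0.
Proof. by rewrite -(abs_gt0 na) abs_four invr_gt0 ltr0n. Qed.

Lemma f_t_escape t z : abs t = 1 -> 2%:R < abs z -> abs (f_t t z) = abs z ^+ 3.
Proof.
move=> abs_t z_gt2; have z_gt0 : 0 < abs z by apply: lt_trans z_gt2.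
have -> : f_t t z = 3%:R * t * z ^+ 3 + (- (3%:R ^+ 2 / 2%:R) * t * z ^+ 2 + 1).
  by rewrite /f_t; field; exact: two_neq0.
have abs_cube : abs (3%:R * t * z ^+ 3) = abs z ^+ 3.
  by rewrite (nabsM na) (absX na) (nabsM na) abs_three abs_t !mul1r.
have abs_square : abs (- (3%:R ^+ 2 / 2%:R) * t * z ^+ 2) = 2%:R * abs z ^+ 2.
  rewrite (nabsM na) (absX na) (nabsM na) (absN na) (nabsM na) (absX na).
  by rewrite abs_three (absV na) abs_two invrK abs_t expr1n mul1r mulr1.
rewrite (abs_add_smallr na) abs_cube //; apply: le_lt_trans (nabs_ultra na _ _) _.
rewrite abs_square (abs1 na) gt_max !exprS expr0 !mulr1.
have := mulr_gt0 z_gt0 z_gt0 => zz_gt0.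
by apply/andP; split; nra.
Qed.

Lemma f_t_escape_iter t z k : abs t = 1 -> 2%:R < abs z ->
  abs z + k%:R <= abs (iter k (f_t t) z).
Proof.
move=> abs_t z_gt2; elim: k => [|k IH]; first by rewrite addr0.
have fk_gt2 : 2%:R < abs (iter k (f_t t) z).
  by apply: lt_le_trans IH; apply: lt_le_trans z_gt2 _; rewrite lerDl.
rewrite iterS f_t_escape // -natr1 addrA.
apply: le_trans (_ : abs (iter k (f_t t) z) + 1 <= _); first by rewrite lerD2r.
move: fk_gt2; set a := abs _ => a_gt2; rewrite !exprS expr0 mulr1.
have a_gt0 : 0 < a by apply: lt_trans a_gt2.
by have := mulr_gt0 a_gt0 a_gt0; nra.
Qed.

Lemma escape_not_bounded_orbit t z N : abs t = 1 ->
  2%:R < abs (iter N (f_t t) z) -> ~ bounded_orbit abs t z.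
Proof.
move=> abs_t fN_gt2 [B orbit_le].
have B_ge0 : 0 <= B by apply: le_trans (orbit_le 0%N); exact: nabs_ge0.
have := f_t_escape_iter (Num.bound B) abs_t fN_gt2; rewrite -iterD.
move=> /le_trans/(_ (orbit_le _)); apply/negP; rewrite -ltNge.
by apply: lt_le_trans (archi_boundP B_ge0) _; rewrite lerDr nabs_ge0.
Qed.

Lemma bounded_orbit_periodic t z P : iter P.+1 (f_t t) z = z ->
  bounded_orbit abs t z.
Proof.
move=> periodic; exists (\sum_(i < P.+1) abs (iter i (f_t t) z)) => n.
have -> : iter n (f_t t) z = iter (n %% P.+1) (f_t t) z.
  rewrite {1}(divn_eq n P.+1) addnC iterD; congr iter.
  by elim: (n %/ P.+1)%N => // q IH; rewrite mulSn iterD IH periodic.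
rewrite (bigD1 (Ordinal (ltn_pmod n (ltn0Sn P)))) //= lerDl.
by rewrite sumr_ge0 // => i _; exact: nabs_ge0.
Qed.

Lemma bounded_orbit_of_image t z : bounded_orbit abs t (f_t t z) ->
  bounded_orbit abs t z.
Proof.
move=> [B orbit_le]; exists (Num.max (abs z) B) => -[|n].
  by rewrite le_max lexx.
by rewrite le_max iterSr orbit_le orbT.
Qed.

Lemma f_t0 (t : K) : f_t t 0 = 1.
Proof. by rewrite /f_t; ring. Qed.

Lemma in_M_of_bounded_orbit1 t : bounded_orbit abs t 1 -> in_M abs t.
Proof. by move=> bounded1; split=> //; apply: bounded_orbit_of_image; rewrite f_t0. Qed.

(* The critical point 1 of f_1 lands on the fixed point -1/2. *)
Lemma in_M_one : in_M abs 1.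
Proof.
apply/in_M_of_bounded_orbit1/bounded_orbit_of_image/(@bounded_orbit_periodic _ _ 0).
by rewrite /f_t /=; field; exact: two_neq0.
Qed.

Lemma horner_crit_step (p : {poly K}) s : (crit_step p).[s] =
  - (3%:R * s) + (1 + s) * (3%:R / 4%:R * (p.[s] * (p.[s] - 3%:R) ^+ 2)).
Proof.
rewrite /crit_step.
by rewrite !(hornerD, hornerN, hornerZ, hornerM, hornerX, hornerC, horner_exp).
Qed.

Lemma horner_crit_poly n s :
  (crit_poly n).[s] = 2%:R * iter n (f_t (1 + s)) 1 + 1.
Proof.
elim: n => [|n IH]; first by rewrite hornerC /=; ring.
rewrite /crit_poly iterS -/(crit_poly n) horner_crit_step IH /f_t /=.
by field; rewrite two_neq0 four_neq0.
Qed.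

Section CritStep0.
Variable p : {poly K}.
Hypothesis p0_crit : p.[0] * (p.[0] - 3%:R) = 0.

Lemma crit_step_horner0 : (crit_step p).[0] = 0.
Proof.
rewrite horner_crit_step mulr0 oppr0 add0r addr0 mul1r expr2 mulrA p0_crit.
by rewrite !mul0r mulr0.
Qed.

Lemma deriv_crit_step_horner0 :
  (crit_step p)^`().[0] = 3%:R / 4%:R * (p.[0] - 3%:R) ^+ 2 * p^`().[0] - 3%:R.
Proof.
rewrite /crit_step !derivE.
rewrite !(hornerD, hornerN, hornerZ, hornerM, hornerX, hornerC, horner_exp).
set a := p.[0]; set d := p^`().[0].
transitivity (3%:R / 4%:R * (a - 3%:R) ^+ 2 * d - 3%:R
  + a * (a - 3%:R) * (3%:R / 4%:R * ((a - 3%:R) + 2%:R * d))); first by ring.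
by rewrite p0_crit mul0r addr0.
Qed.

End CritStep0.

Lemma crit_poly_horner0_crit n :
  (crit_poly n).[0] * ((crit_poly n).[0] - 3%:R) = 0.
Proof.
case: n => [|n]; first by rewrite hornerC subrr mulr0.
elim: n => [|n IH]; rewrite /crit_poly iterS crit_step_horner0 ?mul0r //.
by rewrite hornerC subrr mulr0.
Qed.

Lemma crit_poly_horner0 n : (crit_poly n.+1).[0] = 0.
Proof. exact/crit_step_horner0/crit_poly_horner0_crit. Qed.

Lemma deriv_crit_poly_horner0 n : (crit_poly n.+1)^`().[0] =
  3%:R / 4%:R * ((crit_poly n).[0] - 3%:R) ^+ 2 * (crit_poly n)^`().[0] - 3%:R.
Proof. exact/deriv_crit_step_horner0/crit_poly_horner0_crit. Qed.

(* For n > 0 the derivative at 0 gets multiplied by (3/4) 9, of absolute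
   value 4, and the additive -3 is negligible. *)
Lemma abs_deriv_crit_poly n : abs (crit_poly n.+1)^`().[0] = 4%:R ^+ n.
Proof.
elim: n => [|n IH].
  by rewrite deriv_crit_poly_horner0 derivC horner0 mulr0 add0r (absN na) abs_three.
rewrite deriv_crit_poly_horner0 crit_poly_horner0.
have abs_lead : abs (3%:R / 4%:R * (0 - 3%:R) ^+ 2 * (crit_poly n.+1)^`().[0])
    = 4%:R ^+ n.+1.
  rewrite sub0r sqrrN (nabsM na) (nabsM na) (absX na) IH (nabsM na) (absV na).
  by rewrite abs_three abs_four invrK expr1n mul1r mulr1 exprS.
rewrite (abs_add_smallr na) abs_lead // (absN na) abs_three.
by rewrite exprn_egt1 // ltr1n.
Qed.

End Dynamics.

Section PerturbationOfOne.
Variables (R : realType) (K : closedFieldType) (abs : K -> R).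
Hypotheses (na : nonarch_abs abs) (abs_two : abs 2%:R = 2%:R^-1).

(* s |-> 2 f^{N+1}_{1+s}(1) + 1 vanishes at 0 with derivative of size 4^N, so it
   takes every value c on a disc of radius |c| / 4^N around 0. *)
Lemma exists_param_near_one r c : 0 < r -> c != 0 -> abs c <= 2%:R ->
  exists t N, [/\ t != 1, abs (t - 1) < r & iter N.+1 (f_t t) 1 = (c - 1) / 2%:R].
Proof.
move=> r_gt0 c_neq0 abs_c_le2.
set N := Num.bound (2%:R / r).
have r4N_gt2 : 2%:R < r * 4%:R ^+ N.
  rewrite mulrC -ltr_pdivrMr //; apply: lt_le_trans (archi_boundP _) _.
    by rewrite divr_ge0 // ltW.
  by rewrite -natrX ler_nat ltnW // ltn_expl.
set p := crit_poly N.+1 - c%:P.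
have dp0 : abs (p^`()).[0] = 4%:R ^+ N.
  by rewrite derivB derivC subr0 (abs_deriv_crit_poly na abs_two).
have p0 : p.[0] = - c by rewrite hornerD hornerN hornerC crit_poly_horner0 add0r.
have dp0_neq0 : (p^`()).[0] != 0 by rewrite -(abs_gt0 na) dp0 exprn_gt0.
have [s /rootP] := exists_small_root na dp0_neq0.
rewrite hornerD hornerN hornerC dp0 p0 (absN na) => /eqP; rewrite subr_eq0.
move=> /eqP crit_s s_small; exists (1 + s), N; split.
- apply: contraNneq c_neq0; rewrite -[X in _ = X]addr0 => /addrI s0.
  by rewrite -crit_s s0 crit_poly_horner0.
- rewrite addrAC subrr add0r -(ltr_pM2r (exprn_gt0 N (ltr0n _ 4))).
  exact: le_lt_trans s_small (le_lt_trans abs_c_le2 r4N_gt2).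
- rewrite -crit_s (horner_crit_poly na abs_two) addrK mulrC mulKf //.
  exact: two_neq0 na abs_two.
Qed.

End PerturbationOfOne.

Theorem mainTheorem1 (R : realType) (K : closedFieldType) (abs : K -> R) :
  is_C2 abs ->
  in_M abs 1 /\
  (forall r : R, 0 < r ->
     (exists t : K, abs (t - 1) < r /\ ~ in_M abs t) /\
     (exists t : K, abs (t - 1) < r /\ t <> 1 /\ in_M abs t)).
Proof.
move=> C2; have na := is_C2_nonarch C2; have abs_two := abs2 C2.
have [two_neq0 four_neq0] := (two_neq0 na abs_two, four_neq0 na abs_two).
split; first exact: in_M_one na abs_two.
move=> r r_gt0; have r1_gt0 : 0 < Num.min r 1 by rewrite lt_min r_gt0 ltr01.
have near_one t : abs (t - 1) < Num.min r 1 -> abs (t - 1) < r /\ abs t = 1.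
  rewrite lt_min => /andP[t_r t_1]; split=> //.
  by rewrite -[t](subrK 1) addrC (abs_add_smallr na) (abs1 na).
split.
- have [|t [N [_ /near_one[t_r abs_t] escape]]] :=
    exists_param_near_one na abs_two r1_gt0 (invr_neq0 two_neq0).
    by rewrite (absV na) abs_two invrK.
  exists t; split=> // -[_ bounded1].
  apply: (escape_not_bounded_orbit na abs_two (N := N.+1) abs_t _ bounded1).
  rewrite escape.
  have -> : ((2%:R : K)^-1 - 1) / 2%:R = - 4%:R^-1 by field; apply/andP.
  by rewrite (absN na) (absV na) (abs_four na abs_two) invrK ltr_nat.
- have [|t [N [t_neq1 /near_one[t_r _] periodic]]] :=
    exists_param_near_one na abs_two r1_gt0 (three_neq0 na abs_two).
    by rewrite (abs_three na abs_two) ler1n.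
  exists t; split=> //; split; first exact/eqP.
  apply/in_M_of_bounded_orbit1/(bounded_orbit_periodic _ (P := N)) => //.
  by rewrite periodic -natr1 addrK divff.
Qed.
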